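(* For every balanced word $X$, the reduction algorithm applied to $X$ terminates after finitely many steps.
   Context: Words are finite products of the letters $L,R$; a subword is a contiguous block of letters. A word is balanced if it contains equally many $L$'s and $R$'s. A word is prime if it is nonempty, balanced, and not a product of two nonempty balanced words. For a balanced word $W=a_1\cdots a_n$, $e_k(W)=\sum_{i=1}^k\overline{a_i}$ with $\overline{R}=1$, $\overline{L}=-1$. A prime $P$ of length $n$ is an upper prime if $e_k(P)>0$ for $1\le k\le n-1$, and a lower prime if $e_k(P)<0$ for $1\le k\le n-1$. A word is reduced if it contains no subword $UD$ with $U$ an upper prime and $D$ a lower prime. The reduction algorithm: set $X_0=X$. For $i\ge 0$, if $X_i$ is reduced, stop and output $X_i$; otherwise take the leftmost occurrence of a subword of the form $UD$ ($U$ upper prime, $D$ lower prime), write $X_i=W_1UDW_2$ accordingly, and set $X_{i+1}=W_1DUW_2$. *)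

From Stdlib Require Import List ZArith.
Import ListNotations.
Open Scope Z_scope.

Inductive letter : Type := L | R.

Definition word := list letter.

Definition lval (a : letter) : Z := match a with R => 1 | L => -1 end.

Definition height (w : word) : Z := fold_right (fun a s => lval a + s) 0 w.

Definition e (k : nat) (w : word) : Z := height (firstn k w).

Definition balanced (w : word) : Prop := height w = 0.

Definition prime_word (P : word) : Prop :=
  P <> [] /\ balanced P /\
  ~ (exists A B : word, A <> [] /\ B <> [] /\ balanced A /\ balanced B /\ P = A ++ B).

Definition upper_prime (P : word) : Prop :=
  prime_word P /\
  forall k : nat, (1 <= k)%nat -> (k <= length P - 1)%nat -> e k P > 0.

Definition lower_prime (P : word) : Prop :=
  prime_word P /\
  forall k : nat, (1 <= k)%nat -> (k <= length P - 1)%nat -> e k P < 0.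

Definition reduced (X : word) : Prop :=
  ~ (exists W1 U D W2 : word,
        X = W1 ++ U ++ D ++ W2 /\ upper_prime U /\ lower_prime D).

(* One step of the reduction algorithm: take the leftmost occurrence of a
   subword U D (U upper prime, D lower prime), X = W1 U D W2, and output
   W1 D U W2. "Leftmost" = no such occurrence starts strictly earlier. *)
Definition reduction_step (X Y : word) : Prop :=
  exists W1 U D W2 : word,
    X = W1 ++ U ++ D ++ W2 /\ upper_prime U /\ lower_prime D /\
    Y = W1 ++ D ++ U ++ W2 /\
    (forall W1' U' D' W2' : word,
        X = W1' ++ U' ++ D' ++ W2' -> upper_prime U' -> lower_prime D' ->
        (length W1 <= length W1')%nat).

(* A run of the reduction algorithm from X: X_0 = X, and X_{i+1} is obtained
   from X_i by a reduction step whenever X_i is not reduced (once a reduced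
   word is reached the algorithm stops; we then keep the sequence constant). *)
Definition reduction_run (X : word) (f : nat -> word) : Prop :=
  f 0%nat = X /\
  forall i : nat,
    (reduced (f i) -> f (S i) = f i) /\
    (~ reduced (f i) -> reduction_step (f i) (f (S i))).

(** The second moment [Σ i²·v(a_i)] of the letter values of a word strictly
    decreases at every reduction step.  Replacing a block [U D] of two
    balanced words by [D U] changes only the contribution of the block, by
    [2 (|D|·M(U) - |U|·M(D))], where [M] is the first moment [Σ i·v(a_i)].
    Now [M(w)] is the sum of the heights of the proper suffixes of [w]; for an
    upper prime these are all negative and for a lower prime all positive, so
    the change is negative.  Steps preserve the length [n], and the second
    moment is at least [-n³], so the run must reach a reduced word. *)
From Stdlib Require Import List ZArith Lia Classical.
Import ListNotations.
Open Scope Z_scope.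

(* With 0-based indices, [first_moment w = Σ i·v(a_i)] and
   [second_moment w = Σ i²·v(a_i)]. *)
Fixpoint first_moment (w : word) : Z :=
  match w with [] => 0 | _ :: t => first_moment t + height t end.

Fixpoint second_moment (w : word) : Z :=
  match w with [] => 0 | _ :: t => second_moment t + 2 * first_moment t + height t end.

Lemma height_app (x y : word) : height (x ++ y) = height x + height y.
Proof.
  induction x as [|a x IH]; cbn; [reflexivity|].
  change (fold_right _ 0 (x ++ y)) with (height (x ++ y)).
  change (fold_right _ 0 x) with (height x). lia.
Qed.

Lemma first_moment_app (x y : word) :
  first_moment (x ++ y) =
  first_moment x + first_moment y + Z.of_nat (length x) * height y.
Proof.
  induction x as [|a x IH]; cbn [first_moment length app]; [ring|].
  rewrite IH, height_app, Nat2Z.inj_succ. ring.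
Qed.

Lemma second_moment_app (x y : word) :
  second_moment (x ++ y) =
  second_moment x + second_moment y + 2 * Z.of_nat (length x) * first_moment y
  + Z.of_nat (length x) ^ 2 * height y.
Proof.
  induction x as [|a x IH]; cbn [second_moment length app]; [ring|].
  rewrite IH, first_moment_app, height_app, Nat2Z.inj_succ. ring.
Qed.

Lemma height_ge (w : word) : - Z.of_nat (length w) <= height w.
Proof.
  induction w as [|a w IH]; cbn [length]; [cbn; lia|].
  change (height (a :: w)) with (lval a + height w). destruct a; cbn [lval]; lia.
Qed.

Lemma first_moment_ge (w : word) : - Z.of_nat (length w) ^ 2 <= first_moment w.
Proof.
  induction w as [|a w IH]; cbn [first_moment length]; [cbn; lia|].
  pose proof (height_ge w). nia.
Qed.

Lemma second_moment_ge (w : word) : - Z.of_nat (length w) ^ 3 <= second_moment w.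
Proof.
  induction w as [|a w IH]; cbn [second_moment length]; [cbn; lia|].
  pose proof (height_ge w). pose proof (first_moment_ge w). nia.
Qed.

Lemma height_skipn (k : nat) (w : word) : height (skipn k w) = height w - e k w.
Proof. unfold e. rewrite <- (firstn_skipn k w) at 2. rewrite height_app. ring. Qed.

Lemma first_moment_signed_suffixes (s : Z) (w : word) :
  (forall k, (1 <= k < length w)%nat -> s * height (skipn k w) > 0) ->
  Z.of_nat (length w) - 1 <= s * first_moment w.
Proof.
  induction w as [|a t IH]; intros Hsuf; cbn [length first_moment]; [cbn; lia|].
  assert (IHt : Z.of_nat (length t) - 1 <= s * first_moment t).
  { apply IH. intros k Hk. apply (Hsuf (S k)). cbn [length]. lia. }
  destruct t as [|b t'].
  - cbn in *. lia.
  - assert (s * height (b :: t') > 0) by (apply (Hsuf 1%nat); cbn [length]; lia).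
    rewrite Nat2Z.inj_succ. nia.
Qed.

Lemma prime_word_length (P : word) : prime_word P -> (2 <= length P)%nat.
Proof.
  intros [Hne [Hbal _]]. unfold balanced in Hbal.
  destruct P as [|[|] [|b t]]; cbn; try lia; easy.
Qed.

Lemma upper_prime_first_moment (U : word) : upper_prime U -> first_moment U < 0.
Proof.
  intros [HU Hpre]. pose proof (prime_word_length U HU) as Hlen.
  destruct HU as [_ [Hbal _]].
  assert (Z.of_nat (length U) - 1 <= -1 * first_moment U); [|lia].
  apply first_moment_signed_suffixes. intros k Hk.
  rewrite height_skipn, Hbal. specialize (Hpre k ltac:(lia) ltac:(lia)). lia.
Qed.

Lemma lower_prime_first_moment (D : word) : lower_prime D -> first_moment D > 0.
Proof.
  intros [HD Hpre]. pose proof (prime_word_length D HD) as Hlen.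
  destruct HD as [_ [Hbal _]].
  assert (Z.of_nat (length D) - 1 <= 1 * first_moment D); [|lia].
  apply first_moment_signed_suffixes. intros k Hk.
  rewrite height_skipn, Hbal. specialize (Hpre k ltac:(lia) ltac:(lia)). lia.
Qed.

Lemma second_moment_swap (W1 U D W2 : word) :
  balanced U -> balanced D ->
  second_moment (W1 ++ D ++ U ++ W2) =
  second_moment (W1 ++ U ++ D ++ W2)
  + 2 * (Z.of_nat (length D) * first_moment U - Z.of_nat (length U) * first_moment D).
Proof.
  unfold balanced. intros HU HD.
  rewrite !second_moment_app, !first_moment_app, !height_app, HU, HD.
  ring.
Qed.

Lemma reduction_step_length (X Y : word) :
  reduction_step X Y -> length Y = length X.
Proof.
  intros (W1 & U & D & W2 & -> & _ & _ & -> & _). rewrite !length_app. lia.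
Qed.

Lemma reduction_step_second_moment (X Y : word) :
  reduction_step X Y -> second_moment Y < second_moment X.
Proof.
  intros (W1 & U & D & W2 & -> & HU & HD & -> & _).
  pose proof (upper_prime_first_moment U HU).
  pose proof (lower_prime_first_moment D HD).
  destruct HU as [HU _], HD as [HD _].
  pose proof (prime_word_length U HU). pose proof (prime_word_length D HD).
  destruct HU as (_ & HbU & _), HD as (_ & HbD & _).
  rewrite (second_moment_swap W1 U D W2 HbU HbD). nia.
Qed.

Lemma no_descending_chain_bounded_below (g : nat -> Z) (b : Z) :
  (forall i, b <= g i) -> ~ (forall i, g (S i) < g i).
Proof.
  intros Hb Hdesc.
  assert (Hdrop : forall i, g i <= g 0%nat - Z.of_nat i).
  { induction i as [|i IH]; [cbn; lia|]. specialize (Hdesc i). lia. }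
  pose proof (Hb 0%nat). set (n := Z.to_nat (g 0%nat - b + 1)).
  specialize (Hdrop n). specialize (Hb n). subst n. lia.
Qed.

Theorem proposition6p7 :
  forall (X : word), balanced X ->
  forall f : nat -> word, reduction_run X f ->
  exists n : nat, reduced (f n).
Proof.
  intros X _ f [Hf0 Hrun].
  apply NNPP. intros Hnever.
  assert (Hstep : forall i, reduction_step (f i) (f (S i))).
  { intros i. apply (proj2 (Hrun i)). intros Hi. apply Hnever. now exists i. }
  assert (Hlen : forall i, length (f i) = length X).
  { induction i as [|i IH]; [now rewrite Hf0|].
    now rewrite (reduction_step_length _ _ (Hstep i)). }
  apply (no_descending_chain_bounded_below (fun i => second_moment (f i))
           (- Z.of_nat (length X) ^ 3)).
  - intros i. rewrite <- (Hlen i). apply second_moment_ge.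
  - intros i. exact (reduction_step_second_moment _ _ (Hstep i)).
Qed.
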